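(* Let $k\ge 2$, let $H$ be a triangle-free $k$-regular graph, and let $G=\overline{L(H)}$ be the complement of the line graph of $H$. Then the following are equivalent: $G$ is localizable; $G$ is $k$-localizable; $\chi'(H)=k$.
   Context: A clique is strong if it intersects every maximal independent set. A graph is localizable if its vertex set admits a partition into strong cliques, and $k$-localizable if it admits a partition into exactly $k$ strong cliques. $L(H)$ is the line graph of $H$ (vertex set $E(H)$, edges adjacent iff sharing an endpoint). $\chi'(H)$ is the chromatic index of $H$ (minimum number of matchings whose union is $E(H)$). *)

From mathcomp Require Import all_boot.
Set Implicit Arguments. Unset Strict Implicit. Unset Printing Implicit Defensive.

Definition simple_graph (T : finType) (g : rel T) : Prop :=
  symmetric g /\ irreflexive g.

Section Graphs.
Variable T : finType.
Variable g : rel T.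

Definition is_clique (C : {set T}) : bool :=
  [forall x in C, forall y in C, (x != y) ==> g x y].

Definition is_independent (S : {set T}) : bool :=
  [forall x in S, forall y in S, (x != y) ==> ~~ g x y].

Definition is_maximal_independent (S : {set T}) : bool :=
  maxset is_independent S.

Definition strong_clique (C : {set T}) : Prop :=
  is_clique C /\
  forall S : {set T}, is_maximal_independent S -> C :&: S != set0.

Definition strong_clique_partition (P : {set {set T}}) : Prop :=
  partition P [set: T] /\ forall C, C \in P -> strong_clique C.

Definition localizable : Prop :=
  exists P : {set {set T}}, strong_clique_partition P.

Definition k_localizable (k : nat) : Prop :=
  exists P : {set {set T}}, strong_clique_partition P /\ #|P| = k.

Definition compl_graph : rel T := fun x y => (x != y) && ~~ g x y.

Definition regular (k : nat) : Prop := forall v : T, #|[set w | g v w]| = k.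

Definition triangle_free : Prop :=
  forall x y z : T, ~ [&& g x y, g y z & g x z].

Definition edge_set : {set {set T}} :=
  [set [set x; y] | x in T, y in T & g x y].

Definition edge_type := {e : {set T} | e \in edge_set}.

Definition line_graph : rel edge_type :=
  fun e f => (e != f) && ~~ [disjoint val e & val f].

Definition edge_colorable (c : nat) : bool :=
  [exists f : {ffun edge_type -> 'I_c},
    [forall e : edge_type, forall e' : edge_type,
       line_graph e e' ==> (f e != f e')]].

Lemma edge_colorable_card : edge_colorable #|{: edge_type}|.
Proof.
apply/existsP; exists [ffun e => enum_rank e].
apply/forallP => e; apply/forallP => e'; apply/implyP => /andP[ne _].
by rewrite !ffunE; apply: contra ne => /eqP/enum_rank_inj ->.
Qed.

Lemma edge_colorable_exists : exists c, edge_colorable c.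
Proof. by exists #|{: edge_type}|; exact: edge_colorable_card. Qed.

Definition chromatic_index : nat := ex_minn edge_colorable_exists.

End Graphs.

Arguments line_graph {T} g.
Arguments edge_type {T} g.
Arguments edge_set {T} g.
Arguments edge_colorable {T} g c.
Arguments chromatic_index {T} g.

From mathcomp Require Import all_boot.
Set Implicit Arguments. Unset Strict Implicit. Unset Printing Implicit Defensive.

(* In the complement of L(H) the cliques are the matchings of H and the
   independent sets are the families of pairwise intersecting edges.  When H is
   triangle-free such a family lies in a star, and when H is k-regular with
   k >= 2 every star is a maximal one; so the maximal independent sets are the
   stars and the strong cliques are the perfect matchings.  Each star meets each
   class of a partition into perfect matchings exactly once, so such a partition
   has exactly k classes and is a proper k-edge-colouring; conversely the colour
   classes of a k-edge-colouring are perfect matchings. *)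

Section LineGraphComplement.

Variables (V : finType) (adj : rel V).
Hypothesis adj_simple : simple_graph adj.

Local Notation E := (edge_type adj).
Local Notation G := (compl_graph (line_graph adj)).

Lemma adj_irr a : ~~ adj a a.
Proof. by case: adj_simple => _ ->. Qed.

Lemma adj_sym a b : adj a b = adj b a.
Proof. by case: adj_simple => ->. Qed.

Lemma mem_edge_set a b : adj a b -> [set a; b] \in edge_set adj.
Proof. by move=> hab; apply/imset2P; exists a b; rewrite ?inE. Qed.

Definition edge_of a b (hab : adj a b) : E := exist _ [set a; b] (mem_edge_set hab).

Lemma edge_ends (e : E) a : a \in val e -> exists2 b, adj a b & val e = [set a; b].
Proof.
case: e => /= s /imset2P[x y _]; rewrite inE => hxy ->.
by rewrite in_set2 => /orP[]/eqP->; [exists y | exists x; rewrite 1?adj_sym 1?setUC].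
Qed.

Lemma edge_nonempty (e : E) : exists a, a \in val e.
Proof. by case: e => /= s /imset2P[x y _ _ ->]; exists x; rewrite setU11. Qed.

Lemma meet_edge_other_end v w (e : E) :
  v \notin val e -> ~~ [disjoint [set v; w] & val e] -> w \in val e.
Proof.
rewrite -setI_eq0 => hve /set0Pn[z]; rewrite !inE => /andP[/orP[]/eqP-> hz] //.
by rewrite hz in hve.
Qed.

Lemma compl_lineE e f : G e f = (e != f) && [disjoint val e & val f].
Proof. by rewrite /compl_graph /line_graph; case: eqP => //= _; rewrite negbK. Qed.

Lemma clique_complP (C : {set E}) :
  reflect {in C &, forall e f : E, e != f -> [disjoint val e & val f]} (is_clique G C).
Proof.
apply: (iffP forall_inP) => [hC e f he hf ne | hC e he].
  by move: (hC e he) => /forall_inP/(_ f hf)/implyP/(_ ne); rewrite compl_lineE ne.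
by apply/forall_inP => f hf; apply/implyP => ne; rewrite compl_lineE ne hC.
Qed.

Lemma independent_complP (S : {set E}) :
  reflect {in S &, forall e f : E, e != f -> ~~ [disjoint val e & val f]}
          (is_independent G S).
Proof.
apply: (iffP forall_inP) => [hS e f he hf ne | hS e he].
  by move: (hS e he) => /forall_inP/(_ f hf)/implyP/(_ ne); rewrite compl_lineE ne.
by apply/forall_inP => f hf; apply/implyP => ne; rewrite compl_lineE ne hS.
Qed.

Lemma clique_common_end C v e f : is_clique G C -> e \in C -> f \in C ->
  v \in val e -> v \in val f -> e = f.
Proof.
move=> /clique_complP hC he hf hve hvf; apply/eqP/negPn/negP => /(hC e f he hf).
by move/disjointFr/(_ hve); rewrite hvf.
Qed.

Definition star v := [set e : E | v \in val e].

Lemma star_independent v : is_independent G (star v).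
Proof.
apply/independent_complP => e f; rewrite !inE => hve hvf _.
by apply/negP => /disjointFr/(_ hve); rewrite hvf.
Qed.

Lemma card_star k v : regular adj k -> #|star v| = k.
Proof.
move=> reg; rewrite -(reg v) -(card_imset _ val_inj).
have -> : [set val e | e in star v] = [set [set v; w] | w in [set w | adj v w]].
  apply/setP => x; apply/imsetP/imsetP => [[e] | [w]].
    by rewrite inE => /edge_ends[w hvw ->] ->; exists w; rewrite ?inE.
  by rewrite inE => hvw ->; exists (edge_of hvw); rewrite // inE /= in_set2 eqxx.
apply: card_in_imset => w w'; rewrite !inE => _ hvw' eq_vw.
have : w' \in [set v; w] by rewrite eq_vw !inE eqxx orbT.
by rewrite in_set2 => /orP[]/eqP // ev; rewrite ev (negbTE (adj_irr v)) in hvw'.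
Qed.

Definition proper_edge_coloring (C : eqType) (f : E -> C) :=
  forall e e', line_graph adj e e' -> f e != f e'.

Lemma edge_colorableP c :
  reflect (exists f : {ffun E -> 'I_c}, proper_edge_coloring f)
          (edge_colorable adj c).
Proof.
apply: (iffP existsP) => [[f /forallP hf] | [f hf]]; exists f.
  by move=> e e'; move: (hf e) => /forallP/(_ e')/implyP.
by apply/forallP => e; apply/forallP => e'; apply/implyP/hf.
Qed.

Lemma proper_coloring_star_inj (C : eqType) (f : E -> C) v :
  proper_edge_coloring f -> {in star v &, injective f}.
Proof.
move=> hf e e'; rewrite !inE => hve hve' eq_f; apply/eqP/negPn/negP => ne.
have : line_graph adj e e'.
  by rewrite /line_graph ne; apply/negP => /disjointFr/(_ hve); rewrite hve'.
by move/hf; rewrite eq_f eqxx.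
Qed.

Lemma proper_coloring_star_image k v (f : E -> 'I_k) :
  regular adj k -> proper_edge_coloring f -> f @: star v = [set: 'I_k].
Proof.
move=> reg /(proper_coloring_star_inj (v:=v)) finj; apply/eqP.
by rewrite eqEcard subsetT cardsT card_ord (card_in_imset finj) (card_star v reg) leqnn.
Qed.

Lemma regular_edge_colorable_ge k c (v0 : V) :
  regular adj k -> edge_colorable adj c -> k <= c.
Proof.
move=> reg /edge_colorableP[f /(proper_coloring_star_inj (v:=v0)) finj].
rewrite -(card_star v0 reg) -(card_in_imset finj).
by apply: leq_trans (max_card _) _; rewrite card_ord.
Qed.

Lemma chromatic_index_regular k (v0 : V) :
  regular adj k -> chromatic_index adj = k <-> edge_colorable adj k.
Proof.
move=> reg; rewrite /chromatic_index; case: ex_minnP => m hm hmin.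
split=> [<- // | hk]; apply/eqP; rewrite eqn_leq hmin //.
exact: regular_edge_colorable_ge v0 reg hm.
Qed.

Lemma clique_partition_edge_colorable P :
  partition P [set: E] -> (forall C, C \in P -> is_clique G C) ->
  edge_colorable adj #|P|.
Proof.
case/and3P => /eqP hcov htriv _ hcl.
have hP e : pblock P e \in P by rewrite pblock_mem // hcov inE.
have he e : e \in pblock P e by rewrite mem_pblock hcov inE.
apply/edge_colorableP; exists [ffun e => enum_rank_in (hP e) (pblock P e)].
move=> e e' /andP[ne meet]; rewrite !ffunE; apply: contraNneq meet => eq_rank.
have eq_block : pblock P e = pblock P e'.
  by rewrite -(enum_rankK_in (hP e) (hP e)) eq_rank enum_rankK_in.
by apply: (clique_complP _ (hcl _ (hP e))) ne; rewrite // eq_block.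
Qed.

Section TriangleFreeRegular.

Hypothesis adj_triangle_free : triangle_free adj.
Variable k : nat.
Hypothesis k_ge2 : 2 <= k.
Hypothesis adj_regular : regular adj k.

(* An edge outside the star of v meeting all of its (at least two) edges
   would close a triangle through v. *)
Lemma star_maximal v : is_maximal_independent G (star v).
Proof.
apply/maxsetP; split=> [|S /independent_complP hS sub]; first exact: star_independent.
apply/eqP; rewrite eqEsubset sub andbT; apply/subsetP => e he; rewrite inE.
apply/negPn/negP => hve.
have hw w (hvw : adj v w) : w \in val e.
  have hs : edge_of hvw \in S by apply: (subsetP sub); rewrite inE setU11.
  apply: (meet_edge_other_end hve); apply: hS hs he _.
  by apply: contraNneq hve => <-; rewrite setU11.
have : 1 < #|[set w | adj v w]| by rewrite adj_regular.
case/card_gt1P => w1 [w2 []]; rewrite !inE => hw1 hw2 ne12.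
have [a ha] := edge_nonempty e; have [b hab eab] := edge_ends ha.
move: (hw _ hw1) (hw _ hw2); rewrite eab !in_set2.
case/orP=> /eqP e1 /orP[]/eqP e2; subst w1 w2; rewrite ?eqxx // in ne12;
  by apply: (adj_triangle_free (x:=v) (y:=a) (z:=b)); rewrite hw1 hw2 hab.
Qed.

(* If S leaves the star of one end a of e through f, then f contains the other
   end b; an edge of S avoiding b would have to contain a and meet f away from
   b, closing the triangle a b c. *)
Lemma independent_sub_star S e :
  is_independent G S -> e \in S -> exists v, S \subset star v.
Proof.
move=> /independent_complP hS he.
have [a ha] := edge_nonempty e; have [b hab eab] := edge_ends ha.
have [|/subsetPn[f hf]] := boolP (S \subset star a); first by exists a.
rewrite inE => haf.
have ne_ef : e != f by apply: contraNneq haf => <-.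
have hbf : b \in val f by apply: (meet_edge_other_end haf); rewrite -eab hS.
have [c hbc fbc] := edge_ends hbf.
exists b; apply/subsetP => h hh; rewrite inE; apply/negPn/negP => hbh.
have ne_eh : e != h by apply: contraNneq hbh => <-; rewrite eab !inE eqxx orbT.
have hah : a \in val h.
  by apply: (meet_edge_other_end hbh); rewrite setUC -eab hS.
have ne_fh : f != h by apply: contraNneq hbh => <-.
move: (hS f h hf hh ne_fh); rewrite -setI_eq0 => /set0Pn[z].
rewrite inE fbc in_set2 => /andP[/orP[]/eqP-> hz]; first by rewrite hz in hbh.
have [d had hd] := edge_ends hah.
move: hz; rewrite hd in_set2 => /orP[]/eqP ec.
  by rewrite fbc -ec !inE eqxx orbT in haf.
by apply: (adj_triangle_free (x:=a) (y:=b) (z:=c)); rewrite hab hbc ec had.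
Qed.

Lemma maximal_independent_star (v0 : V) S :
  is_maximal_independent G S -> exists v, S = star v.
Proof.
case/maxsetP => hS hmax.
have [v hv] : exists v, S \subset star v.
  have [-> | [e he]] := set_0Vmem S; first by exists v0; rewrite sub0set.
  exact: independent_sub_star hS he.
by exists v; apply/esym/hmax; first exact: star_independent.
Qed.

Lemma strong_cliqueE (v0 : V) C :
  strong_clique G C <-> is_clique G C /\ forall v, exists2 e, e \in C & v \in val e.
Proof.
split=> [[hC hstrong] | [hC hcov]]; split=> //.
  move=> v; have /set0Pn[e] := hstrong _ (star_maximal v).
  by rewrite !inE => /andP[]; exists e.
move=> S /(maximal_independent_star v0)[v ->].
by have [e he hve] := hcov v; apply/set0Pn; exists e; rewrite !inE he.
Qed.

Lemma card_strong_clique_partition (v0 : V) P :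
  strong_clique_partition G P -> #|P| = k.
Proof.
case=> /and3P[/eqP hcov htriv _] hstrong.
have hE e : e \in cover P by rewrite hcov inE.
have hmem e : e \in pblock P e by rewrite mem_pblock.
have -> : P = pblock P @: star v0.
  apply/setP => C; apply/idP/imsetP => [hC | [e _ ->]]; last exact: pblock_mem.
  case/(strong_cliqueE v0): (hstrong C hC) => _ /(_ v0)[e he hve].
  by exists e; rewrite ?inE // (def_pblock htriv hC he).
rewrite -(card_star v0 adj_regular); apply: card_in_imset => e e'.
rewrite !inE => hve hve' eq_block.
have hcl := (hstrong _ (pblock_mem (hE e))).1.
by apply: (clique_common_end hcl (hmem e) _ hve hve'); rewrite eq_block.
Qed.

Lemma strong_clique_partition_of_coloring (v0 : V) :
  edge_colorable adj k -> exists P, strong_clique_partition G P.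
Proof.
case/edge_colorableP => f hf.
exists (preim_partition f [set: E]); split=> [|C]; first exact: preim_partitionP.
case/imsetP => e _ ->; apply/(strong_cliqueE v0); split.
  apply/clique_complP => e1 e2; rewrite !inE => /eqP eq1 /eqP eq2 ne.
  apply/negPn/negP => meet.
  by have := hf e1 e2; rewrite /line_graph ne meet -eq1 -eq2 eqxx => /(_ isT).
move=> v; have : f e \in f @: star v.
  by rewrite (proper_coloring_star_image v adj_regular hf) inE.
by case/imsetP => e' hve' eq_f; exists e'; rewrite !inE in hve' *; rewrite ?eq_f ?eqxx.
Qed.

End TriangleFreeRegular.

End LineGraphComplement.

Theorem mainTheorem7 (V : finType) (adj : rel V) (k : nat) :
  simple_graph adj -> 0 < #|V| -> 2 <= k ->
  triangle_free adj -> regular adj k ->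
  let G := compl_graph (line_graph adj) in
  (localizable G <-> k_localizable G k) /\
  (k_localizable G k <-> chromatic_index adj = k).
Proof.
move=> simple /card_gt0P[v0 _] k_ge2 tri_free reg G.
have card_P := card_strong_clique_partition simple tri_free k_ge2 reg v0.
have chi_k := chromatic_index_regular simple v0 reg.
have coloring_part := strong_clique_partition_of_coloring simple tri_free k_ge2 reg v0.
split; split.
- by case=> P hP; exists P; split; last exact: card_P.
- by case=> P [hP _]; exists P.
- case=> P [[hpart hstrong] hPk]; apply/chi_k; rewrite -hPk.
  by apply: clique_partition_edge_colorable => // C /hstrong[].
- move/chi_k/coloring_part => -[P hP].
  by exists P; split; last exact: card_P.
Qed.
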